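(* Let $k$ be a difference field of characteristic $0$ and $R=k\{y_1,\ldots,y_n\}$. Every radical well-mixed monomial $\sigma$-ideal $I$ of $R$ is generated by finitely many monomials as a radical well-mixed $\sigma$-ideal, i.e. $I=\langle F\rangle_r$ for some finite set $F$ of monomials.
   Context: A difference field is a field $k$ with a ring endomorphism $\sigma$; $R=k\{y_1,\ldots,y_n\}$ is the polynomial ring over $k$ in the variables $\sigma^j(y_i)$, with $\sigma$ extended naturally. For $p=\sum_ic_ix^i\in\mathbb{N}[x]$ and $a\in R$, $a^p=\prod_i(\sigma^i(a))^{c_i}$; monomials are $\mathbf{y}^{\mathbf{u}}=y_1^{u_1}\cdots y_n^{u_n}$ with $\mathbf{u}\in\mathbb{N}[x]^n$. A $\sigma$-ideal is an ideal stable under $\sigma$; monomial if generated by monomials; well-mixed if $ab\in I\Rightarrow a\sigma(b)\in I$. $\langle F\rangle_r$ is the smallest radical well-mixed $\sigma$-ideal containing $F$. *)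

(* difference polynomial ring k{y_1..y_n} as the monoid
   algebra {malg k[cmonom ('I_n * nat)]}; the variable indexed by (i, j)
   stands for sigma^j(y_i). *)
From HB Require Import structures.
From mathcomp Require Import all_boot ssralg finmap.
From mathcomp.multinomials Require Import monalg.
Set Implicit Arguments. Unset Strict Implicit. Unset Printing Implicit Defensive.
Import GRing.Theory.
Local Open Scope ring_scope.

Section DiffPoly.
Variables (k : fieldType) (sigma : {rmorphism k -> k}) (n : nat).

Definition dvar := ('I_n * nat)%type.
(* monomials y^u, u in N[x]^n *)
Definition dmonom := cmonom dvar.
Definition dpoly := {malg k[dmonom]}.

Definition dX (v : dvar) : dpoly := << ucm v >>.
Definition dmon (m : dmonom) : dpoly := << m >>.

Definition dshift (m : dmonom) : dpoly :=
  \prod_(v <- finsupp (m : {fsfun _ -> nat with 0%N})) dX (v.1, v.2.+1) ^+ (m v).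

Definition dsigma (p : dpoly) : dpoly := mmap (fun c => (sigma c)%:MP) dshift p.

Implicit Types (I J : dpoly -> Prop) (S : dpoly -> Prop).

Definition is_ideal I :=
  [/\ I 0, (forall a b, I a -> I b -> I (a + b)) & (forall r a, I a -> I (r * a))].

Definition is_sigma_ideal I := is_ideal I /\ (forall a, I a -> I (dsigma a)).

Definition well_mixed I := forall a b, I (a * b) -> I (a * dsigma b).

Definition radical I := forall a m, I (a ^+ m.+1) -> I a.

Definition ideal_gen S (p : dpoly) : Prop :=
  forall J, is_ideal J -> (forall q, S q -> J q) -> J p.

Definition rwm_gen S (p : dpoly) : Prop :=
  forall J, is_sigma_ideal J -> well_mixed J -> radical J ->
    (forall q, S q -> J q) -> J p.

Definition is_monomial_ideal I :=
  exists M : dmonom -> Prop,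
    forall p, I p <-> ideal_gen (fun q => exists2 m, M m & q = dmon m) p.

End DiffPoly.

(* Let S be the set of monomials lying in I, and record for a monomial m and each
   i the bound 1 + max {j | sigma^j(y_i) divides m}.  By Dickson's lemma some
   finite F included in S has, below the profile of every m in S, the profile
   of some f in F.  Each variable sigma^j(y_i) of such an f can be shifted up to
   a variable sigma^j'(y_i) (j <= j') of m, since a well-mixed ideal containing
   a * b contains a * sigma(b); so m^(deg f) lies in <F>_r and, by radicality,
   so does m.
   As S generates I, this gives I included in <F>_r; the converse holds because
   I is itself a radical well-mixed sigma-ideal. *)

From HB Require Import structures.
From mathcomp Require Import all_boot ssralg finmap.
From mathcomp.multinomials Require Import monalg.
From Stdlib Require Import Classical.
Set Implicit Arguments. Unset Strict Implicit.
Import GRing.Theory.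

Lemma all2_leq_behead (s1 s2 : seq nat) n :
  size s1 = n.+1 -> size s2 = n.+1 ->
  all2 leq s1 s2 = (head 0 s1 <= head 0 s2) && all2 leq (behead s1) (behead s2).
Proof. by case: s1 => // x1 s1; case: s2. Qed.

Lemma all2_leq_map (T : eqType) (F G : T -> nat) (s : seq T) :
  all2 leq (map F s) (map G s) -> forall x, x \in s -> F x <= G x.
Proof.
elim: s => [//|y s IH] /= /andP[Fy Fs] x; rewrite inE => /orP[/eqP ->//|].
exact: IH.
Qed.

Section Dickson.
Variable T : eqType.
Implicit Types (S : T -> Prop) (key : T -> seq nat).

Definition dickson_basis key S (F : seq T) :=
  (forall f, f \in F -> S f) /\
  (forall t, S t -> exists2 f, f \in F & all2 leq (key f) (key t)).

Definition dickson_property n := forall S key,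
  (forall t, S t -> size (key t) = n) -> exists F, dickson_basis key S F.

Lemma dickson_property0 : dickson_property 0.
Proof.
move=> S key key0; have [[t0 St0]|noS] := classic (exists t, S t).
  exists [:: t0]; split=> [f|t St]; first by rewrite inE => /eqP ->.
  by exists t0; rewrite ?inE // (size0nil (key0 _ St0)) (size0nil (key0 _ St)).
by exists [::]; split=> // t St; case: noS; exists t.
Qed.

Section Step.
Variable n : nat.
Hypothesis dickson_n : dickson_property n.

Lemma dickson_head_below S key c : (forall t, S t -> size (key t) = n.+1) ->
  exists F, dickson_basis key (fun t => S t /\ head 0 (key t) < c) F.
Proof.
move=> keyS; elim: c => [|c [F [FS Fbasis]]]; first by exists [::]; split=> // t [].
pose Sc t := S t /\ head 0 (key t) = c.
have [Fc [FcS Fcbasis]] : exists Fc, dickson_basis (behead \o key) Sc Fc.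
  by apply: dickson_n => t [St _] /=; rewrite size_behead keyS.
exists (Fc ++ F); split=> [f|t [St]].
  by rewrite mem_cat => /orP[/FcS[Sf <-]|/FS[Sf /ltnW]].
rewrite ltnS leq_eqVlt => /orP[/eqP tc|tc]; last first.
  by have [f fF ft] := Fbasis t (conj St tc); exists f; rewrite // mem_cat fF orbT.
have [f fFc ft] := Fcbasis t (conj St tc); have [Sf fc] := FcS f fFc.
exists f; first by rewrite mem_cat fFc.
by rewrite (all2_leq_behead (keyS _ Sf) (keyS _ St)) fc tc leqnn.
Qed.

Lemma dickson_propertyS : dickson_property n.+1.
Proof.
move=> S key keyS.
have [B [BS Bbasis]] : exists B, dickson_basis (behead \o key) S B.
  by apply: dickson_n => t St /=; rewrite size_behead keyS.
pose K := \max_(b <- B) head 0 (key b).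
have [F [FS Fbasis]] := dickson_head_below K keyS.
exists (B ++ F); split=> [f|t St].
  by rewrite mem_cat => /orP[/BS|/FS[]].
have [tK|Kt] := ltnP (head 0 (key t)) K.
  by have [f fF ft] := Fbasis t (conj St tK); exists f; rewrite // mem_cat fF orbT.
have [f fB ft] := Bbasis t St; exists f; first by rewrite mem_cat fB.
rewrite (all2_leq_behead (keyS _ (BS _ fB)) (keyS _ St)) ft andbT.
by apply: leq_trans Kt; apply: (leq_bigmax_seq (P := xpredT)).
Qed.

End Step.

Lemma dickson n : dickson_property n.
Proof. by elim: n => [|n]; [apply: dickson_property0 | apply: dickson_propertyS]. Qed.

End Dickson.

Local Open Scope ring_scope.

Section DifferenceMonomials.
Variables (k : fieldType) (sigma : {rmorphism k -> k}) (n : nat).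
Implicit Types (m f : dmonom n) (v w : dvar n).

Lemma dmon1 : dmon k (@mone (dmonom n)) = 1.
Proof. exact: mpolyC1E. Qed.

Lemma dmonM m1 m2 : dmon k (mmul m1 m2) = dmon k m1 * dmon k m2.
Proof. by rewrite /dmon malgM_def fgmulUU mulr1. Qed.

Lemma dsigma_dX (i : 'I_n) j : dsigma sigma (dX k (i, j)) = dX k (i, j.+1).
Proof.
rewrite /dsigma /mmap msuppU1 big_seq_fset1 mcoeffU1 eqxx rmorph1 mpolyC1E mul1r.
by rewrite /dshift mdomU big_seq_fset1 cmUU.
Qed.

Lemma ucm_divcmK m w : w \in finsupp m -> mmul (ucm w) (divcm m (ucm w)) = m.
Proof.
move=> wm; apply/eqP/cmP => v; rewrite cmM divcmE cmU.
case: eqP => [<-|_]; last by rewrite add0n subn0.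
by rewrite add1n subn1 prednK // lt0n cmE_neq0.
Qed.

Definition dominated f m := forall v, v \in finsupp f ->
  exists2 w, w \in finsupp m & w.1 = v.1 /\ (v.2 <= w.2)%N.

Lemma dominated_divcm f m u : dominated f m -> dominated (divcm f u) m.
Proof.
move=> fm v; rewrite -cmE_neq0 divcmE => vfu; apply: fm.
by rewrite -cmE_neq0; apply: contraNneq vfu => ->.
Qed.

Section WellMixedIdeal.
Variable J : dpoly k n -> Prop.
Hypotheses (J_ideal : is_ideal J) (J_wm : well_mixed sigma J).

Lemma idealMl r a : J a -> J (r * a).
Proof. by case: J_ideal => _ _; apply. Qed.

Lemma well_mixed_shift q (i : 'I_n) j j' : (j <= j')%N ->
  J (q * dX k (i, j)) -> J (q * dX k (i, j')).
Proof.
move=> /subnK <-; elim: (j' - j)%N => [|d IH] Jq; first by rewrite add0n.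
by rewrite addSn -dsigma_dX; apply/J_wm/IH.
Qed.

Lemma well_mixed_dominated f m p : dominated f m ->
  J (p * dmon k f) -> J (p * dmon k m ^+ mdeg f).
Proof.
move=> fm Jf; move degf: (mdeg f) => d.
elim: d f p degf fm Jf => [|d IH] f p degf fm Jf.
  by rewrite expr0; move: Jf; rewrite (mdeg_eq0I degf) dmon1.
have /fset0Pn [v vf] : finsupp f != fset0.
  by apply/eqP => suppf0; move: degf; rewrite mdegE suppf0 big_seq_fset0.
have deff := ucm_divcmK vf; set g := divcm f (ucm v) in deff.
have degg : mdeg g = d by move: degf; rewrite -deff mdegM mdegU add1n => -[].
have := IH g (p * dX k v) degg (dominated_divcm fm).
rewrite -mulrA -dmonM deff => /(_ Jf); rewrite mulrAC.
have [w wm [w1 w2]] := fm v vf; case: v {vf deff g degg} w1 w2 => i j /= <- w2.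
move=> /(well_mixed_shift w2); rewrite -surjective_pairing.
have -> : p * dmon k m ^+ d.+1 = p * dmon k m ^+ d * dX k w * dmon k (divcm m (ucm w)).
  by rewrite -mulrA -[dX k w]/(dmon k (ucm w)) -dmonM (ucm_divcmK wm) -mulrA -exprSr.
by move=> Jw; rewrite mulrC; apply: idealMl.
Qed.

Lemma radical_well_mixed_dominated f m : radical J -> dominated f m ->
  J (dmon k f) -> J (dmon k m).
Proof.
move=> J_rad fm Jf; apply: (J_rad _ (mdeg f)); rewrite exprS; apply: idealMl.
by rewrite -[dmon k m ^+ _]mul1r; apply: well_mixed_dominated fm _; rewrite mul1r.
Qed.

End WellMixedIdeal.
End DifferenceMonomials.

Section ShiftProfile.
Variable n : nat.
Implicit Types (m f : dmonom n).

Definition shift_bound m (i : 'I_n) : nat :=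
  (\max_(w <- finsupp m | w.1 == i) w.2.+1)%N.

Definition shift_profile m : seq nat := map (shift_bound m) (enum 'I_n).

Lemma size_shift_profile m : size (shift_profile m) = n.
Proof. by rewrite size_map size_enum_ord. Qed.

Lemma shift_profile_dominated f m :
  all2 leq (shift_profile f) (shift_profile m) -> dominated f m.
Proof.
move=> /all2_leq_map fm v vf.
have vm : (v.2 < shift_bound m v.1)%N.
  apply: leq_trans (fm _ (mem_enum _ _)).
  exact: (leq_bigmax_seq (P := fun w : dvar n => w.1 == v.1) (F := fun w => w.2.+1)).
have /hasP[w wm /andP[/eqP w1 w2]] :
    has (fun w : dvar n => (w.1 == v.1) && (v.2 <= w.2)%N) (finsupp m).
  apply: contraLR vm => /hasPn vm; rewrite -leqNgt.
  by apply/bigmax_leqP_seq => w wm /eqP w1; move: (vm w wm); rewrite w1 eqxx ltnNge.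
by exists w.
Qed.

End ShiftProfile.

Theorem corollary5p6 (k : fieldType) (sigma : {rmorphism k -> k}) (n : nat)
  (char0 : [pchar k] =i pred0) (I : dpoly k n -> Prop) :
  is_sigma_ideal sigma I -> well_mixed sigma I -> radical I ->
  is_monomial_ideal I ->
  exists F : seq (dmonom n),
    forall p, I p <-> rwm_gen sigma (fun q => exists2 m, m \in F & q = @dmon k n m) p.
Proof.
move=> [I_ideal I_sigma] I_wm I_rad [M IM].
have [F [FI Fbasis]] :=
  @dickson _ n (fun m => I (dmon k m)) (@shift_profile n) (fun m _ => size_shift_profile m).
exists F => p; split=> [Ip J [J_ideal _] J_wm J_rad FJ|].
  apply: ((IM p).1 Ip J J_ideal) => _ [m Mm ->].
  have Im : I (dmon k m) by apply/IM => J' _; apply; exists m.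
  have [f fF fm] := Fbasis m Im.
  apply: (radical_well_mixed_dominated J_ideal J_wm J_rad (shift_profile_dominated fm)).
  by apply: FJ; exists f.
by move/(_ I (conj I_ideal I_sigma) I_wm I_rad); apply=> _ [m mF ->]; apply: FI.
Qed.
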